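(* Let $n\ge1$ and let $\mathfrak{c}=\{c_{ij}\}_{1\le i<j\le n}$, $\mathfrak{\ell}=\{\ell_1,\dots,\ell_n\}$ be integers. For every $\sigma\in\{+,-\}^n$, the Cartier datum $m_\sigma\in\mathbb{Z}^n$ of the divisor $D(\mathfrak{c},\mathfrak{\ell})$ lies in the closure $\overline{C(\mathfrak{c},\mathfrak{\ell})}$ of $C(\mathfrak{c},\mathfrak{\ell})$ in the Euclidean topology of $\mathbb{R}^n$.
   Context: $A_n(x)=\ell_n$, $A_j(x)=\ell_j-\sum_{k=j+1}^nc_{jk}x_k$ for $1\le j\le n-1$. $C(\mathfrak{c},\mathfrak{\ell})=\{x\in\mathbb{R}^n:$ for each $1\le k\le n$, $A_k(x)<x_k<0$ or $0\le x_k\le A_k(x)\}$. Toric data: $e_j^+$ standard basis of $\mathbb{R}^n$, $e_j^-:=-e_j^+-\sum_{k>j}c_{jk}e_k^+$; $\Sigma_{\mathfrak{c}}$ the fan of cones generated by subsets of $\{e_1^\pm,\dots,e_n^\pm\}$ not containing any $\{e_j^+,e_j^-\}$, with maximal cones $\mathrm{Cone}\{e_1^{\sigma_1},\dots,e_n^{\sigma_n}\}$ indexed by $\sigma\in\{+,-\}^n$; $D(\mathfrak{c},\mathfrak{\ell})=\sum_j\ell_jD_{e_j^-}$ on the toric variety $X(\mathfrak{c})$. The Cartier datum $m_\sigma\in\mathbb{Z}^n$ is the unique vector with $\langle m_\sigma,e_j^{+}\rangle=0$ if $\sigma_j=+$ and $\langle m_\sigma,e_j^-\rangle=-\ell_j$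 if $\sigma_j=-$ (standard inner product); explicitly $m_{\sigma,j}=0$ if $\sigma_j=+$ and $m_{\sigma,j}=A_j(m_{\sigma,j+1},\dots,m_{\sigma,n})$ if $\sigma_j=-$. *)

From HB Require Import structures.
From mathcomp Require Import all_boot all_order all_algebra.
From mathcomp Require Import all_classical all_reals all_analysis.
Set Implicit Arguments. Unset Strict Implicit. Unset Printing Implicit Defensive.
Import Order.TTheory GRing.Theory Num.Theory.
Local Open Scope ring_scope.

(* Indices 1..n of the paper are represented 0-based by 0..n-1.
   c j k : coefficient c_{jk} (only used for j < k < n);
   l j   : ell_j;
   sig j : sign sigma_j, with true = '+' and false = '-'. *)

Definition Afun {R : realType} (n : nat) (c : nat -> nat -> int) (l : nat -> int)
  (x : 'rV[R]_n) (j : nat) : R :=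
  (l j)%:~R - \sum_(k < n | (j < k)%N) (c j k)%:~R * x ord0 k.

Definition Cset {R : realType} (n : nat) (c : nat -> nat -> int) (l : nat -> int)
  : set 'rV[R]_n :=
  [set x | forall k : 'I_n,
      (Afun c l x k < x ord0 k < 0) \/ (0 <= x ord0 k <= Afun c l x k)].

(* Cartier datum, computed from the last coordinate downwards:
   cartier_tail n c l sig k = [m_{n-k}; ...; m_{n-1}] (0-based),
   with m_j = 0 if sig j, and m_j = A_j(m_{j+1},...,m_{n-1}) otherwise. *)
Fixpoint cartier_tail (n : nat) (c : nat -> nat -> int) (l : nat -> int)
  (sig : nat -> bool) (k : nat) : seq int :=
  match k with
  | 0 => [::]
  | k'.+1 =>
      let j := (n - k'.+1)%N in
      let t := cartier_tail n c l sig k' in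
      (if sig j then 0 else l j - \sum_(i < k') c j (j + 1 + i)%N * t`_i) :: t
  end.

Definition cartier (n : nat) (c : nat -> nat -> int) (l : nat -> int)
  (sig : nat -> bool) : 'rV[int]_n :=
  \row_(k < n) (cartier_tail n c l sig n)`_k.

Definition cartierR {R : realType} (n : nat) (c : nat -> nat -> int) (l : nat -> int)
  (sig : nat -> bool) : 'rV[R]_n :=
  map_mx (fun z : int => z%:~R) (@cartier n c l sig).

(* Each coordinate of the Cartier datum is 0 or A_j(m), i.e. an endpoint of the
   interval (A_j, 0) or [0, A_j] cut out by the j-th condition.  Since A_j only
   involves later coordinates and is continuous in them, a point of C close to m
   is built from the last coordinate backwards: once x_(j+1), ..., x_n are close
   to m, A_j(x) is close to A_j(m), and x_j can be chosen in the j-th interval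
   close to its endpoint m_j. *)

From HB Require Import structures.
From mathcomp Require Import all_boot all_order all_algebra.
From mathcomp Require Import all_classical all_reals all_analysis.
From mathcomp Require Import lra zify.
Import Order.TTheory GRing.Theory Num.Theory numFieldNormedType.Exports.
Local Open Scope ring_scope.

Lemma size_cartier_tail n c l sig k : size (cartier_tail n c l sig k) = k.
Proof. by elim: k => //= k ->. Qed.

Lemma cartier_tail_drop n c l sig d :
  drop d (cartier_tail n c l sig n) = cartier_tail n c l sig (n - d).
Proof.
elim: d => [|d IHd]; first by rewrite drop0 subn0.
have [le_dn | lt_nd] := leqP d.+1 n.
  by rewrite -add1n -drop_drop IHd -[(n - d)%N](subnSK le_dn) /= drop0.
by rewrite !drop_oversize ?size_cartier_tail ?(eqP (ltnW lt_nd)) // ltnW.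
Qed.

Lemma cartier_rec n c l sig (j : 'I_n) :
  cartier n c l sig ord0 j =
  if sig j then 0 else l j - \sum_(k < n | (j < k)%N) c j k * cartier n c l sig ord0 k.
Proof.
have drop_j : (cartier_tail n c l sig n)`_j = (drop j (cartier_tail n c l sig n))`_0.
  by rewrite nth_drop addn0.
rewrite mxE drop_j cartier_tail_drop -[(n - j)%N](subnSK (ltn_ord j)) /=.
rewrite (subnSK (ltn_ord j)) subKn ?(ltnW (ltn_ord j)) //=.
case: (sig j) => //=; congr (_ - _).
under [RHS]eq_bigr do rewrite mxE.
rewrite -(big_mkord (fun k => (j < k)%N) (fun k => c j k * (cartier_tail n c l sig n)`_k)).
rewrite (big_cat_nat (n := j.+1)) //= [X in X + _]big_nat_cond.
rewrite [X in X + _]big_pred0 ?add0r; last first.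
  by move=> k; rewrite ltnS andbC; case: leqP.
rewrite -[in RHS](add0n j.+1) big_addn big_mkord; apply: eq_big => [i | i _].
  by rewrite add0n leq_addl.
by rewrite addn1 [(i + _)%N]addnC -nth_drop cartier_tail_drop.
Qed.

Section Approximation.
Variables (R : realType) (n : nat) (c : nat -> nat -> int) (l : nat -> int)
  (sig : nat -> bool).

Definition between0 (a v : R) : Prop := (a < v < 0) \/ (0 <= v <= a).

Lemma between0_near_endpoint (a t e : R) :
  0 < e -> t = 0 \/ t = a -> exists v, between0 a v /\ `|t - v| < e.
Proof.
move=> e0 t0a; have [a_ge0 | a_lt0] := lerP 0 a.
  exists t; rewrite subrr normr0; split=> //; right.
  by case: t0a => ->; rewrite ?lexx ?a_ge0.
suff [v av tv] : exists2 v, a < v < 0 & `|t - v| < e by exists v; split; first left.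
case: t0a => ->; [exists (Num.max (a / 2) (- (e / 2))) | exists (Num.min (a / 2) (a + e / 2))].
all: by rewrite ?ltr_norml ?maxEle ?minEle; case: ifPn; rewrite -?ltNge => h; apply/andP; split; lra.
Qed.

Lemma between0_approx (a b t e : R) :
  0 < e -> t = 0 \/ t = b -> `|b - a| < e / 2 -> exists v, between0 a v /\ `|t - v| < e.
Proof.
move=> e0 t0b ba_lt; pose s := if t == 0 then 0 else a.
have [v [av sv]] : exists v, between0 a v /\ `|s - v| < e / 2.
  by apply: between0_near_endpoint; rewrite ?divr_gt0 // /s; case: ifP; [left | right].
have ts : `|t - s| < e / 2.
  by rewrite /s; case: eqP t0b => [-> | _ [] // ->]; rewrite ?subrr ?normr0 ?divr_gt0.
exists v; split=> //; rewrite -(subrK s t) -addrA (splitr e).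
by apply: le_lt_trans (ler_normD _ _) _; apply: ltrD.
Qed.

Lemma Afun_tail_ext (x y : 'rV[R]_n) (j : nat) :
  (forall k : 'I_n, (j < k)%N -> x ord0 k = y ord0 k) -> Afun c l x j = Afun c l y j.
Proof. by move=> xy; rewrite /Afun; congr (_ - _); apply: eq_bigr => k /xy ->. Qed.

Lemma Afun_continuous_tail (x : 'rV[R]_n) (j : nat) (e : R) : 0 < e ->
  exists2 d : R, 0 < d & forall y : 'rV[R]_n,
    (forall k : 'I_n, (j < k)%N -> `|x ord0 k - y ord0 k| < d) ->
    `|Afun c l x j - Afun c l y j| < e.
Proof.
move=> e0; pose S := \sum_(k < n | (j < k)%N) `|(c j k)%:~R : R|.
have S1_gt0 : 0 < S + 1 by rewrite ltr_wpDl ?sumr_ge0.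
exists (e / (S + 1)) => [|y xy]; first by rewrite divr_gt0.
have -> : Afun c l x j - Afun c l y j =
          \sum_(k < n | (j < k)%N) (c j k)%:~R * (y ord0 k - x ord0 k).
  by rewrite /Afun (eq_bigr _ (fun k _ => mulrBr _ _ _)) sumrB /=; lra.
apply: le_lt_trans (ler_norm_sum _ _ _) _.
apply: (@le_lt_trans _ _ (S * (e / (S + 1)))).
  rewrite mulr_suml; apply: ler_sum => k jk.
  by rewrite normrM ler_wpM2l // distrC ltW // xy.
by rewrite mulrA ltr_pdivrMr //; nra.
Qed.

Lemma cartierR_rec (j : 'I_n) :
  @cartierR R n c l sig ord0 j = if sig j then 0 else Afun c l (@cartierR R n c l sig) j.
Proof.
rewrite mxE cartier_rec; case: (sig j); first exact: rmorph0.
rewrite rmorphB rmorph_sum /Afun; congr (_ - _); apply: eq_bigr => k _.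
by rewrite rmorphM /cartierR !mxE.
Qed.

Lemma cartierR_approx_from (j : nat) (e : R) : (j <= n)%N -> 0 < e ->
  exists y : 'rV[R]_n, forall k : 'I_n, (j <= k)%N ->
    `|@cartierR R n c l sig ord0 k - y ord0 k| < e /\ between0 (Afun c l y k) (y ord0 k).
Proof.
move=> le_jn; rewrite -(subKn le_jn).
elim: (n - j)%N (leq_subr j n) e => [|i IHi] le_in e e0.
  by exists 0 => k; rewrite subn0 leqNgt ltn_ord.
have lt_j0n : (n - i.+1 < n)%N by lia.
pose j0 := Ordinal lt_j0n; pose m := @cartierR R n c l sig.
have [d d0 Am_near] := Afun_continuous_tail m j0 (e / 2) (divr_gt0 e0 (ltr0n R 2)).
have ed_gt0 : 0 < Num.min e d by rewrite lt_min e0 d0.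
have [y y_near] := IHi (ltnW le_in) _ ed_gt0.
have [v [Av mv]] : exists v, between0 (Afun c l y j0) v /\ `|m ord0 j0 - v| < e.
  apply: (between0_approx _ (Afun c l m j0)) => //.
    by rewrite cartierR_rec; case: (sig j0); [left | right].
  apply: Am_near => k j0k; have /y_near[mk _] : (n - i <= k)%N by rewrite /= in j0k; lia.
  by apply: lt_le_trans mk _; rewrite ge_min lexx orbT.
exists (\row_k (if k == j0 then v else y ord0 k)) => k j0k.
rewrite mxE (@Afun_tail_ext _ y) => [|k' kk']; last first.
  by rewrite mxE; case: eqP => // k'j0; rewrite k'j0 /= in kk'; lia.
case: eqP => [-> // | ne_kj0].
have /y_near[mk Ak] : (n - i <= k)%N by move/eqP: ne_kj0; rewrite -val_eqE /=; lia.
by split=> //; apply: lt_le_trans mk _; rewrite ge_min lexx.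
Qed.

End Approximation.

Theorem lemma2p3 (R : realType) (n : nat) (c : nat -> nat -> int) (l : nat -> int)
  (sig : nat -> bool) :
  (1 <= n)%N ->
  closure (@Cset R n c l) (@cartierR R n c l sig).
Proof.
move=> _ B /nbhs_ballP[e e0 ball_B].
have [y y_near] := @cartierR_approx_from R n c l sig 0 e (leq0n n) e0.
exists y; split; first by move=> k; have [] := y_near k isT.
apply: ball_B; split=> // i k; rewrite [i]ord1.
by have [] := y_near k isT.
Qed.
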